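(* Let $f$ be a firm and let $\widehat{Ch}_f:[0,1]^W\to[0,1]^W$ be the function defined below. Then $\widehat{Ch}_f$ is continuous and satisfies the revealed preference property: for any $\mathbf x,\mathbf x'\in[0,1]^W$ with $\mathbf x'\le\mathbf x$, if $\widehat{Ch}_f(\mathbf x)\le\mathbf x'$ then $\widehat{Ch}_f(\mathbf x')=\widehat{Ch}_f(\mathbf x)$.
   Context: $W=\{w_1,\dots,w_n\}$ is a finite set, and firm $f$ has a strict, complete, transitive preference $\succ_f$ over $2^W$; subsets of $W$ are identified with their indicator vectors in $\{0,1\}^W$. Let $\mathbf u^1\succ_f\mathbf u^2\succ_f\cdots\succ_f\mathbf u^L\succ_f\mathbf 0$ be all sets $S$ with $S\succ_f\emptyset$, listed in preference order. For $\mathbf x\in[0,1]^W$ define recursively $t_0=0$, $\mathbf z^0=\mathbf x$, and for $k=1,\dots,L$: $t_k=\min\{1-\sum_{j=0}^{k-1}t_j,\ z^{k-1}_i : i\in\{1,\dots,n\},\ u^k_i\neq0\}$ and $\mathbf z^k=\mathbf z^{k-1}-t_k\mathbf u^k$. Then $\widehat{Ch}_f(\mathbf x)=\sum_{k=1}^L t_k\mathbf u^k$. Vector inequalities are componentwise. *)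

From HB Require Import structures.
From mathcomp Require Import all_boot all_order all_algebra.
From mathcomp Require Import all_classical all_reals all_analysis.
Set Implicit Arguments. Unset Strict Implicit. Unset Printing Implicit Defensive.
Import Order.TTheory GRing.Theory Num.Theory.
Local Open Scope ring_scope.

(* The firm's preference over 2^W : [pref A B] means A \succ_f B. *)
Definition strict_pref (W : finType) (pref : rel {set W}) : Prop :=
  [/\ irreflexive pref, transitive pref &
      forall A B : {set W}, A != B -> pref A B || pref B A].

(* u^1, ..., u^L : all sets strictly preferred to the empty set, listed in
   decreasing preference order (most preferred first). *)
Definition acceptable_sets (W : finType) (pref : rel {set W}) : seq {set W} :=
  sort (fun A B => (A == B) || pref A B)
       [seq S <- enum {set W} | pref S (finset.set0 : {set W})].

Definition ind (R : realType) (W : finType) (u : {set W}) : W -> R :=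
  fun i => (i \in u)%:R.

(* One step of the recursion: state = (sum_{j<k} t_j, z^{k-1}, sum_{j<k} t_j u^j).
   t_k = min { 1 - sum_{j<k} t_j, z^{k-1}_i : u^k_i <> 0 }. *)
Definition chstep (R : realType) (W : finType)
    (st : R * (W -> R) * (W -> R)) (u : {set W}) : R * (W -> R) * (W -> R) :=
  let: (s, z, acc) := st in
  let t := \big[Num.min/(1 - s)]_(i in u) z i in
  (s + t, fun i => z i - t * ind R u i, fun i => acc i + t * ind R u i).

Definition Chhat (R : realType) (W : finType) (pref : rel {set W})
    (x : W -> R) : W -> R :=
  (foldl (@chstep R W) (0, x, (fun _ => 0)) (acceptable_sets pref)).2.

Definition cube (R : realType) (W : finType) : set (W -> R) :=
  [set x | forall i, 0 <= x i <= 1].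

(* Every quantity produced by the recursion is obtained from x by finitely
   many sums, products and minima, so Ch-hat is continuous.
   For revealed preference, run the recursion on x and on x' side by side.
   The accumulated choice only grows, and after step k it already contains
   t_k on u^k; so Ch-hat(x) <= x' forces t_k <= z'_i for i in u^k, whence the
   minimum defining t_k is the same for x' as for x.  By induction both runs
   then take the same steps, the residuals differing by x - x' throughout.
   Neither argument uses the order of the u^k. *)
From HB Require Import structures.
From mathcomp Require Import all_boot all_order all_algebra.
From mathcomp Require Import all_classical all_reals all_analysis.
Import numFieldNormedType.Exports.
Import Order.TTheory GRing.Theory Num.Theory.
Local Open Scope ring_scope.
Local Open Scope classical_set_scope.

Lemma continuous_ptws (T : topologicalType) (I : Type) (K : topologicalType)
    (g : T -> {ptws I -> K}) :
  (forall i, continuous (fun x => g x i)) -> continuous g.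
Proof.
move=> cg x; apply/cvg_sup => i.
exact: continuous_comp_initial (fun f : I -> K => f i) g (cg i) x.
Qed.

Section ChoiceRecursion.
Context {R : realType} {W : finType}.
Local Notation state := (R * (W -> R) * (W -> R))%type.
Local Arguments chstep : simpl never.
Implicit Types (st : state) (u : {set W}) (l : seq {set W}).

Definition step_length st u : R :=
  \big[Num.min/(1 - st.1.1)]_(i in u) st.1.2 i.

Lemma chstepE st u : chstep st u =
  (st.1.1 + step_length st u,
   fun i => st.1.2 i - step_length st u * ind R u i,
   fun i => st.2 i + step_length st u * ind R u i).
Proof. by case: st => [[s z] acc]. Qed.

Lemma step_length_le_budget st u : step_length st u <= 1 - st.1.1.
Proof. exact: bigmin_le_id. Qed.

Lemma step_length_le_residual st u i : i \in u -> step_length st u <= st.1.2 i.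
Proof. exact: bigmin_le_cond. Qed.

Definition feasible st := st.1.1 <= 1 /\ forall i, 0 <= st.1.2 i.

Lemma step_length_ge0 st u : feasible st -> 0 <= step_length st u.
Proof. by case=> s1 z0; apply: le_bigmin => [|i _]; rewrite ?subr_ge0. Qed.

Lemma residual_chstep_ge0 st u i :
  feasible st -> 0 <= st.1.2 i - step_length st u * ind R u i.
Proof.
case=> _ z0; rewrite /ind; case: (boolP (i \in u)) => iu.
  by rewrite mulr1 subr_ge0 step_length_le_residual.
by rewrite mulr0 subr0.
Qed.

Lemma feasible_chstep st u : feasible st -> feasible (chstep st u).
Proof.
move=> fst; rewrite chstepE; split=> [|i]; last exact: residual_chstep_ge0.
by rewrite /= -lerBrDl step_length_le_budget.
Qed.

Lemma chosen_le_foldl_chstep l st i :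
  feasible st -> st.2 i <= (foldl (@chstep R W) st l).2 i.
Proof.
elim: l st => [|u l IHl] st fst //=.
apply: le_trans (IHl _ (feasible_chstep _ u fst)).
by rewrite chstepE lerDl mulr_ge0 ?step_length_ge0 ?ler0n.
Qed.

Lemma step_length_eq s z z' acc u :
  (forall i, z' i <= z i) ->
  (forall i, i \in u -> step_length (s, z, acc) u <= z' i) ->
  step_length (s, z', acc) u = step_length (s, z, acc) u.
Proof.
move=> le_z'z le_z'; apply/le_anti/andP; split.
  apply: le_bigmin => [|i iu]; first exact: step_length_le_budget.
  exact: le_trans (step_length_le_residual (s, z', acc) _ _ iu) (le_z'z i).
by apply: le_bigmin => //; exact: step_length_le_budget.
Qed.

Lemma foldl_chstep_revealed l s z z' acc :
  feasible (s, z, acc) -> (forall i, z' i <= z i) ->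
  (forall i, (foldl (@chstep R W) (s, z, acc) l).2 i <= acc i + z' i) ->
  (foldl (@chstep R W) (s, z', acc) l).2 =
  (foldl (@chstep R W) (s, z, acc) l).2.
Proof.
elim: l s z z' acc => [|u l IHl] s z z' acc fst le_z'z //=.
rewrite 2![chstep (s, _, acc) u]chstepE /=.
set t := step_length (s, z, acc) u => chosen_le.
have fst' := feasible_chstep _ u fst; rewrite chstepE -/t /= in fst'.
have -> : step_length (s, z', acc) u = t.
  apply: step_length_eq => // i iu; rewrite -(lerD2l (acc i)).
  apply: le_trans (chosen_le i); move: (chosen_le_foldl_chstep l _ i fst').
  by rewrite /= /ind iu mulr1.
apply: IHl => // [i|i]; first by rewrite lerD2r.
by rewrite addrACA subrr addr0 chosen_le.
Qed.

Section Continuity.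
Context {T : topologicalType}.

Definition continuous_state (S : T -> state) :=
  [/\ continuous (fun x => (S x).1.1),
      forall i, continuous (fun x => (S x).1.2 i) &
      forall i, continuous (fun x => (S x).2 i)].

Lemma continuous_bigmin (I : Type) (r : seq I) (P : pred I)
    (a : T -> R) (f : I -> T -> R) :
  continuous a -> (forall i, continuous (f i)) ->
  continuous (fun x => \big[Num.min/a x]_(i <- r | P i) f i x).
Proof.
move=> ca cf; elim: r => [|j r IHr]; first by under eq_fun do rewrite big_nil.
under eq_fun do rewrite big_cons.
by case: (P j) => //= x; exact: continuous_min (cf j x) (IHr x).
Qed.

Lemma continuous_state_chstep S u :
  continuous_state S -> continuous_state (fun x => chstep (S x) u).
Proof.
case=> cs cz cacc.
have ct : continuous (fun x => step_length (S x) u).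
  apply: continuous_bigmin => // x.
  by apply: cvgB; [exact: cvg_cst | exact: cs].
have cu i : continuous (fun x => step_length (S x) u * ind R u i).
  by move=> x; apply: cvgM; [exact: ct | exact: cvg_cst].
split=> [|i|i]; under eq_fun do rewrite chstepE; move=> x /=.
- by apply: cvgD; [exact: cs | exact: ct].
- by apply: cvgB; [exact: cz | exact: cu].
- by apply: cvgD; [exact: cacc | exact: cu].
Qed.

Lemma continuous_state_foldl l S :
  continuous_state S -> continuous_state (fun x => foldl (@chstep R W) (S x) l).
Proof.
by elim: l S => [|u l IHl] S cS //=; apply/IHl/continuous_state_chstep.
Qed.

End Continuity.

End ChoiceRecursion.

Theorem lemma1 (R : realType) (W : finType) (pref : rel {set W}) :
  strict_pref pref ->
  {within (@cube R W : set {ptws W -> R}),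
     continuous (Chhat pref : {ptws W -> R} -> {ptws W -> R})} /\
  (forall x x' : W -> R, @cube R W x -> @cube R W x' ->
     (forall i, x' i <= x i) ->
     (forall i, Chhat pref x i <= x' i) ->
     Chhat pref x' = Chhat pref x).
Proof.
move=> _; split.
  apply/continuous_subspaceT/continuous_ptws => i.
  have cS : continuous_state (fun x : {ptws W -> R} => (0, x, fun _ => 0)).
    by split=> [|j|j]; [exact: cst_continuous | exact: proj_continuous
                        | exact: cst_continuous].
  by have [_ _] := continuous_state_foldl (acceptable_sets pref) _ cS; apply.
move=> x x' cx _ le_x'x chosen_le; apply: foldl_chstep_revealed => //.
- by split=> //= i; case/andP: (cx i).
- by move=> i; rewrite add0r; exact: chosen_le.
Qed.
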